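(* Let $\mathbf{A}\in\mathbb{R}^{m\times n}$ and run Algorithm 2 (described in the context) on $\mathbf{A}$. Consider any iteration of its loop at whose start the current shift $\alpha$ is positive, and let $\mathbf{Q}\in\mathbb{R}^{m\times l}$ (with orthonormal columns) and $\alpha>0$ be the current quantities at the start of that iteration, i.e. just before the SVD of $\mathbf{A}\mathbf{A}^{\mathrm{T}}\mathbf{Q}-\alpha\mathbf{Q}$ is computed. Then for every $i\le l$, $$\sigma_i(\mathbf{Q}^{\mathrm{T}}\mathbf{A})\le\sqrt{\sigma_i(\mathbf{A}\mathbf{A}^{\mathrm{T}}\mathbf{Q}-\alpha\mathbf{Q})+\alpha}\le\sigma_i(\mathbf{A}).$$
   Context: $\sigma_i(\cdot)$ denotes the $i$-th largest singular value. Algorithm 2 (exact arithmetic), with input $\mathbf{A}\in\mathbb{R}^{m\times n}$ and integers $k,s,p$: set $l=k+s$, let $\mathbf{\Omega}\in\mathbb{R}^{n\times l}$ have i.i.d. standard Gaussian entries, set $\mathbf{Q}=\mathrm{orth}(\mathbf{A}\mathbf{\Omega})$ (an $m\times l$ matrix with orthonormal columns spanning the column space of $\mathbf{A}\mathbf{\Omega}$) and $\alpha=0$; then for $j=1,\dots,p$: compute the economic SVD $\mathbf{A}\mathbf{A}^{\mathrm{T}}\mathbf{Q}-\alpha\mathbf{Q}=\mathbf{Q}'\hat{\mathbf{S}}\mathbf{W}^{\mathrm{T}}$ (singular values in decreasing order on the diagonal of $\hat{\mathbf{S}}$), replace $\mathbf{Q}$ by $\mathbf{Q}'$, and if $\hat{\mathbf{S}}(l,l)>\alpha$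 replace $\alpha$ by $(\hat{\mathbf{S}}(l,l)+\alpha)/2$. *)

From HB Require Import structures.
From mathcomp Require Import all_boot all_order all_algebra.
From Stdlib Require Import ClassicalEpsilon.
Set Implicit Arguments. Unset Strict Implicit. Unset Printing Implicit Defensive.
Import Order.TTheory GRing.Theory Num.Theory.
Local Open Scope ring_scope.

Section Defs.
Variable R : rcfType.

Definition orthonormal_cols (m l : nat) (Q : 'M[R]_(m, l)) : Prop :=
  Q^T *m Q = 1%:M.

Definition diagr (r : nat) (d : nat -> R) : 'M[R]_r :=
  diag_mx (\row_(i < r) d i).

(* d is the (0-indexed, nonincreasing) sequence of singular values of M,
   witnessed by an economic SVD  M = U diag(d) V^T  with r = min(m,n);
   convention: d i = 0 for i >= min(m,n). *)
Definition is_singular_values (m n : nat) (M : 'M[R]_(m, n)) (d : nat -> R) : Prop :=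
  exists (U : 'M[R]_(m, minn m n)) (V : 'M[R]_(n, minn m n)),
    [/\ orthonormal_cols U /\ orthonormal_cols V,
        (forall i j, (i <= j)%N -> d j <= d i),
        (forall i, 0 <= d i),
        (forall i, (minn m n <= i)%N -> d i = 0) &
        M = U *m diagr (minn m n) d *m V^T].

(* sv M i = sigma_{i+1}(M), the (i+1)-th largest singular value (0-indexed) *)
Definition sv (m n : nat) (M : 'M[R]_(m, n)) : nat -> R :=
  epsilon (inhabits (fun _ => 0)) (fun d => is_singular_values M d).

Definition econ_svd (m l : nat) (B : 'M[R]_(m, l)) (Q' : 'M[R]_(m, l))
  (d : nat -> R) : Prop :=
  exists W : 'M[R]_l,
    [/\ orthonormal_cols Q', orthonormal_cols W,
        (forall i j, (i <= j < l)%N -> d j <= d i),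
        (forall i, (i < l)%N -> 0 <= d i) &
        B = Q' *m diagr l d *m W^T].

(* A run of Algorithm 2 with input A, k, s, p and Gaussian sample Om:
   Q j, alpha j are the values of Q and alpha at the start of the (j+1)-th
   loop iteration (Q 0, alpha 0 are the initial values). *)
Definition alg2_run (m n k s : nat) (A : 'M[R]_(m, n)) (Om : 'M[R]_(n, k + s)) (p : nat)
  (Q : nat -> 'M[R]_(m, k + s)) (alpha : nat -> R) : Prop :=
  [/\ orthonormal_cols (Q 0%N),
      ((Q 0%N)^T == (A *m Om)^T)%MS,
      alpha 0%N = 0 &
      forall j, (j < p)%N ->
        exists d : nat -> R,
          econ_svd (A *m A^T *m Q j - alpha j *: Q j) (Q j.+1) d /\
          alpha j.+1 = (if alpha j < d (k + s).-1
                        then (d (k + s).-1 + alpha j) / 2 else alpha j)].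
End Defs.

From HB Require Import structures.
From mathcomp Require Import all_boot all_order all_algebra.
From mathcomp Require Import ring lra.
From mathcomp Require Import complex spectral sesquilinear polyrcf.
From Stdlib Require Import ClassicalEpsilon.
Import Order.TTheory GRing.Theory Num.Theory.
Local Open Scope ring_scope.

Set Implicit Arguments. Unset Strict Implicit. Unset Printing Implicit Defensive.

(* Write l := k + s and B := A A^T Q - alpha Q. Along the loop, Q keeps orthonormal
   columns and 0 <= 2 alpha <= sigma_l(A)^2; the shift stays below this bound because
   the new shift averages alpha with sigma_l(B) <= sigma_l(A)^2 - alpha.
   Both inequalities are Courant-Fischer arguments. If Q x is orthogonal to the top
   i - 1 left singular vectors of A, then |B x| <= (sigma_i(A)^2 - alpha) |x|, because
   2 alpha <= sigma_i(A)^2 forces |sigma_k(A)^2 - alpha| <= sigma_i(A)^2 - alpha for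
   k >= i; hence sigma_i(B) <= sigma_i(A)^2 - alpha. On the span of the top i left
   singular vectors of Q^T A, <Q x, B x> = |A^T Q x|^2 - alpha |x|^2 is at least
   (sigma_i(Q^T A)^2 - alpha) |x|^2, so by Cauchy-Schwarz sigma_i(B) is at least
   sigma_i(Q^T A)^2 - alpha.
   Singular value decompositions over a real closed field are built by induction,
   splitting off a top singular pair with Householder reflections; the largest
   eigenvalue of M^T M is found among the real roots of its characteristic polynomial,
   and the complex spectral theorem shows it is positive when M != 0. *)

Section EuclideanGeometry.
Variable R : rcfType.

Definition dotc n (x y : 'cV[R]_n) : R := (x^T *m y) 0 0.
Definition sqnorm n (x : 'cV[R]_n) : R := \sum_i x i 0 ^+ 2.

Lemma sqnormE n (x : 'cV[R]_n) : sqnorm x = dotc x x.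
Proof. by rewrite /dotc mxE; apply: eq_bigr => i _; rewrite !mxE expr2. Qed.

Lemma sqnorm_ge0 n (x : 'cV[R]_n) : 0 <= sqnorm x.
Proof. by apply: sumr_ge0 => i _; apply: sqr_ge0. Qed.

Lemma sqnorm_eq0 n (x : 'cV[R]_n) : (sqnorm x == 0) = (x == 0).
Proof.
apply/idP/eqP => [|->]; last by rewrite /sqnorm big1 // => i _; rewrite mxE expr0n.
rewrite psumr_eq0 => [/allP x0|i _]; last exact: sqr_ge0.
apply/matrixP => i j; rewrite ord1 mxE.
by have /implyP/(_ isT) := x0 i (mem_index_enum _); rewrite sqrf_eq0 => /eqP.
Qed.

Lemma sqnorm_gt0 n (x : 'cV[R]_n) : (0 < sqnorm x) = (x != 0).
Proof. by rewrite lt_def sqnorm_eq0 sqnorm_ge0 andbT. Qed.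

Lemma dotcC n (x y : 'cV[R]_n) : dotc x y = dotc y x.
Proof. by rewrite /dotc !mxE; apply: eq_bigr => i _; rewrite !mxE mulrC. Qed.

Lemma dotc0l n (y : 'cV[R]_n) : dotc 0 y = 0.
Proof. by rewrite /dotc trmx0 mul0mx mxE. Qed.

Lemma dotcDr n (x y z : 'cV[R]_n) : dotc x (y + z) = dotc x y + dotc x z.
Proof. by rewrite /dotc mulmxDr mxE. Qed.

Lemma dotcDl n (x y z : 'cV[R]_n) : dotc (x + y) z = dotc x z + dotc y z.
Proof. by rewrite dotcC dotcDr !(dotcC z). Qed.

Lemma dotcZr n a (x y : 'cV[R]_n) : dotc x (a *: y) = a * dotc x y.
Proof. by rewrite /dotc -scalemxAr mxE. Qed.

Lemma dotcNr n (x y : 'cV[R]_n) : dotc x (- y) = - dotc x y.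
Proof. by rewrite -scaleN1r dotcZr mulN1r. Qed.

Lemma dotc_mulmxr m n (M : 'M[R]_(m, n)) x y : dotc x (M *m y) = dotc (M^T *m x) y.
Proof. by rewrite /dotc trmx_mul trmxK mulmxA. Qed.

Lemma sqnormD n (x y : 'cV[R]_n) :
  sqnorm (x + y) = sqnorm x + 2 * dotc x y + sqnorm y.
Proof. by rewrite !sqnormE dotcDl !dotcDr (dotcC y x); ring. Qed.

Lemma sqnormZ n a (x : 'cV[R]_n) : sqnorm (a *: x) = a ^+ 2 * sqnorm x.
Proof. by rewrite !sqnormE dotcZr dotcC dotcZr; ring. Qed.

Lemma sqnormN n (x : 'cV[R]_n) : sqnorm (- x) = sqnorm x.
Proof. by rewrite -scaleN1r sqnormZ sqrrN expr1n mul1r. Qed.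

Lemma sqnormB n (x y : 'cV[R]_n) :
  sqnorm (x - y) = sqnorm x - 2 * dotc x y + sqnorm y.
Proof. by rewrite sqnormD dotcNr sqnormN mulrN. Qed.

Lemma sqr_le_of_dotc_ge m (q b : 'cV[R]_m) c : 0 <= c ->
  c * sqnorm q <= dotc q b -> c ^+ 2 * sqnorm q <= sqnorm b.
Proof.
move=> c_ge0 qb; have := sqnorm_ge0 (b - c *: q).
by rewrite sqnormB sqnormZ dotcZr dotcC; have := ler_wpM2l c_ge0 qb; nra.
Qed.

Lemma orthonormal_colsM m n r (U : 'M[R]_(m, n)) (V : 'M[R]_(n, r)) :
  orthonormal_cols U -> orthonormal_cols V -> orthonormal_cols (U *m V).
Proof.
move=> U_o V_o.
by rewrite /orthonormal_cols trmx_mul mulmxA -(mulmxA V^T) U_o mulmx1.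
Qed.

Lemma orthonormal_cols_pid_mx p q :
  (q <= p)%N -> orthonormal_cols (pid_mx q : 'M[R]_(p, q)).
Proof.
move=> le_qp; rewrite /orthonormal_cols tr_pid_mx mul_pid_mx minnn.
by rewrite (minn_idPr le_qp) pid_mx_1.
Qed.

Lemma orthonormal_cols_block p r (X : 'M[R]_(p, r)) :
  orthonormal_cols X -> orthonormal_cols (block_mx (1%:M : 'M_1) 0 0 X).
Proof.
move=> X_o; rewrite /orthonormal_cols tr_block_mx mulmx_block !trmx0 trmx1.
by rewrite !mulmx0 !mul0mx !mulmx1 !addr0 !add0r X_o -scalar_mx_block.
Qed.

Lemma orthonormal_cols_rank m l (Q : 'M[R]_(m, l)) : orthonormal_cols Q -> \rank Q = l.
Proof.
move=> Q_o; apply/eqP; rewrite eqn_leq rank_leq_col /=.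
by rewrite -[X in (X <= _)%N](mxrank1 R l) -Q_o mxrankM_maxr.
Qed.

Lemma sqnorm_orthonormal m r (U : 'M[R]_(m, r)) x :
  orthonormal_cols U -> sqnorm (U *m x) = sqnorm x.
Proof. by move=> U_o; rewrite !sqnormE dotc_mulmxr mulmxA U_o mul1mx. Qed.

Lemma sqnorm_orthonormal_proj m r (U : 'M[R]_(m, r)) (y : 'cV[R]_m) :
  orthonormal_cols U ->
  sqnorm y = sqnorm (U^T *m y) + sqnorm (y - U *m (U^T *m y)).
Proof.
move=> U_o; set w := U^T *m y; set z := y - U *m w.
have Uz0 : U^T *m z = 0 by rewrite mulmxBr mulmxA U_o mul1mx subrr.
rewrite -[y in LHS](subrK (U *m w)) -/z addrC sqnormD sqnorm_orthonormal //.
by rewrite dotcC dotc_mulmxr Uz0 dotc0l mulr0 addr0.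
Qed.

Lemma sqnorm_tr_orthonormal_le m r (U : 'M[R]_(m, r)) (y : 'cV[R]_m) :
  orthonormal_cols U -> sqnorm (U^T *m y) <= sqnorm y.
Proof.
by move=> U_o; rewrite [leRHS](sqnorm_orthonormal_proj y U_o) lerDl sqnorm_ge0.
Qed.

Lemma orthonormal_col0_completion n (v : 'cV[R]_n.+1) : sqnorm v = 1 ->
  exists2 H : 'M[R]_n.+1, orthonormal_cols H & col 0 H = v.
Proof.
move=> v1; set e : 'cV[R]_n.+1 := delta_mx 0 0.
have dotc_e x : dotc x e = x 0 0.
  rewrite /dotc mxE (bigD1 0) //= big1 => [|k k0]; rewrite !mxE ?eqxx.
    by rewrite mulr1 addr0.
  by rewrite (negbTE k0) mulr0.
have [->|ve] := eqVneq v e.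
  by exists 1%:M; rewrite /orthonormal_cols ?trmx1 ?mulmx1 // colE mul1mx.
(* the Householder reflection exchanging [e] and [v] *)
set w := v - e; set c := 2 / sqnorm w.
have w_sqnorm : sqnorm w = 2 - 2 * v 0 0.
  by rewrite sqnormB v1 dotc_e sqnormE dotc_e !mxE !eqxx /=; ring.
have w_neq0 : sqnorm w != 0 by rewrite sqnorm_eq0 subr_eq0.
exists (1%:M - c *: (w *m w^T)).
  have H_sym : (1%:M - c *: (w *m w^T))^T = 1%:M - c *: (w *m w^T).
    by rewrite linearB linearZ /= trmx1 trmx_mul trmxK.
  have ww : w^T *m w = (sqnorm w)%:M by rewrite [LHS]mx11_scalar sqnormE.
  rewrite /orthonormal_cols H_sym mulmxBl !mulmxBr !mul1mx !mulmx1.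
  rewrite -!scalemxAl -!scalemxAr !mulmxA -(mulmxA w) ww mul_mx_scalar !scalerA.
  rewrite -scalemxAl scalerA.
  have -> : c * c * sqnorm w = c + c by rewrite /c; field.
  by rewrite scalerDl opprB addrK subrK.
have c_v0 : c * (v 0 0 - 1) = -1 by rewrite /c w_sqnorm; field; rewrite -w_sqnorm.
have w00 : w 0 0 = v 0 0 - 1 by rewrite !mxE eqxx.
rewrite colE mulmxBl mul1mx -scalemxAl -mulmxA [w^T *m e]mx11_scalar -/(dotc w e).
by rewrite dotc_e mul_mx_scalar w00 scalerA c_v0 scaleN1r opprK addrC subrK.
Qed.

End EuclideanGeometry.

Section DiagonalAndSelection.
Variable R : rcfType.

Lemma tr_diagr r (d : nat -> R) : (diagr r d)^T = diagr r d.
Proof. exact: tr_diag_mx. Qed.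

Lemma diagrB r (f g : nat -> R) :
  diagr r (fun k => f k - g k) = diagr r f - diagr r g.
Proof. by rewrite /diagr -linearB; congr diag_mx; apply/rowP => k; rewrite !mxE. Qed.

Lemma diagr_delta r (d : nat -> R) (i : 'I_r) :
  diagr r d *m delta_mx i 0 = d i *: (delta_mx i 0 : 'cV[R]_r).
Proof.
apply/matrixP => a b; rewrite mul_diag_mx !mxE.
by have [->|ai] := eqVneq a i; rewrite ?eqxx ?(negbTE ai) ?mulr0.
Qed.

Lemma diagr_block r s (d : nat -> R) :
  diagr (1 + r) (fun i => if i is i'.+1 then d i' else s) =
  block_mx (s%:M : 'M_1) 0 0 (diagr r d).
Proof.
apply/matrixP => i j.
case: (split_ordP i) => {}i ->; case: (split_ordP j) => {}j ->;
  rewrite ?block_mxEul ?block_mxEur ?block_mxEdl ?block_mxEdr !mxE.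
- by rewrite !ord1.
- by rewrite eq_lrshift mulr0n.
- by rewrite eq_rlshift mulr0n.
- by rewrite eq_rshift.
Qed.

Lemma sqnorm_diagr r (f : nat -> R) (z : 'cV[R]_r) :
  sqnorm (diagr r f *m z) = \sum_(a < r) (f a * z a 0) ^+ 2.
Proof. by apply: eq_bigr => a _; rewrite mul_diag_mx !mxE. Qed.

Lemma sqnorm_diagr_le r (f : nat -> R) (z : 'cV[R]_r) c :
  (forall a : 'I_r, z a 0 != 0 -> f a ^+ 2 <= c) ->
  sqnorm (diagr r f *m z) <= c * sqnorm z.
Proof.
move=> f_le; rewrite sqnorm_diagr /sqnorm mulr_sumr; apply: ler_sum => a _.
have [->|za] := eqVneq (z a 0) 0; first by rewrite mulr0 expr0n mulr0.
by rewrite exprMn ler_wpM2r ?sqr_ge0 ?f_le.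
Qed.

Lemma sqnorm_diagr_ge r (f : nat -> R) (z : 'cV[R]_r) c :
  (forall a : 'I_r, z a 0 != 0 -> c <= f a ^+ 2) ->
  c * sqnorm z <= sqnorm (diagr r f *m z).
Proof.
move=> f_ge; rewrite sqnorm_diagr /sqnorm mulr_sumr; apply: ler_sum => a _.
have [->|za] := eqVneq (z a 0) 0; first by rewrite mulr0 expr0n mulr0.
by rewrite exprMn ler_wpM2r ?sqr_ge0 ?f_ge.
Qed.

Lemma pid_mx_mul_coord0 p q (y : 'cV[R]_q) (a : 'I_p) :
  (q <= a)%N -> ((pid_mx q : 'M[R]_(p, q)) *m y) a 0 = 0.
Proof.
move=> le_qa; rewrite mxE big1 // => b _.
by rewrite mxE ltnNge le_qa andbF mul0r.
Qed.

Lemma tr_pid_mx_mul_coord0 p q (w : 'cV[R]_p) (a : 'I_p) :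
  (pid_mx q : 'M[R]_(p, q))^T *m w = 0 -> (a < q)%N -> w a 0 = 0.
Proof.
move=> w_ker lt_aq; have /matrixP/(_ (Ordinal lt_aq) 0) := w_ker.
rewrite tr_pid_mx !mxE (bigD1 a) //= big1 => [|b ba]; rewrite mxE.
  by rewrite eqxx lt_aq mul1r addr0.
have ab : (a == b :> nat) = false by apply/negbTE; rewrite eq_sym.
by rewrite ab mul0r.
Qed.

Lemma kernel_nonzero i (C : 'M[R]_(i, i.+1)) :
  exists2 y : 'cV[R]_i.+1, y != 0 & C *m y = 0.
Proof.
have /rowV0Pn [y y_ker y_neq0] : kermx C^T != 0.
  by rewrite -mxrank_eq0 mxrank_ker mxrank_tr -lt0n subn_gt0 ltnS rank_leq_row.
exists y^T; first by rewrite trmx_eq0.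
by apply/trmx_inj; rewrite trmx_mul trmxK trmx0; apply/eqP; rewrite -sub_kermx.
Qed.

End DiagonalAndSelection.

Section SymmetricEigen.
Variable R : rcfType.

Lemma symmetric_nonzero_eigenvalue n (N : 'M[R]_n) : N^T = N -> N != 0 ->
  exists2 a, a != 0 & eigenvalue N a.
Proof.
move=> N_sym N_neq0; pose f := real_complex R; pose NC := map_mx f N.
have f_real x : f x \is Num.real by apply/complex_realP; exists x.
have NC_herm : NC \is hermsymmx.
  apply/is_hermitianmxP; rewrite expr0 scale1r; apply/matrixP => a b.
  by rewrite !mxE conj_Creal ?f_real // -{1}N_sym mxE.
have NCE := orthomx_spectralP (hermitian_normalmx NC_herm).
set P := spectralmx NC in NCE; set D := spectral_diag NC in NCE.
have P_unit : P \in unitmx by apply: spectral_unit.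
have [j Dj] : exists j, D 0 j != 0.
  apply/existsP; apply: contraR N_neq0 => /existsPn D0.
  have {}D0 : D = 0 by apply/matrixP => a b; rewrite ord1 mxE; apply/eqP/negPn/D0.
  have : NC = 0 by rewrite NCE D0 raddf0 mulmx0 mul0mx.
  by move/eqP; rewrite map_mx_eq0.
have NC_Dj : eigenvalue NC (D 0 j).
  apply/eigenvalueP; exists (row j P).
    rewrite -row_mul NCE !mulmxA mulmxV // mul1mx row_mul row_diag_mx.
    by rewrite -scalemxAl -rowE.
  rewrite rowE mulmx_free_eq0 ?row_free_unit //; apply/eqP => /matrixP/(_ 0 j)/eqP.
  by rewrite !mxE !eqxx oner_eq0.
have /complex_realP [a Dja] : D 0 j \is Num.real.
  exact: mxOverP (hermitian_spectral_diag_real NC_herm) _ _.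
exists a; first by apply: contraNneq Dj => a0; rewrite Dja a0.
by rewrite -(eigenvalue_map f); move: NC_Dj; rewrite Dja.
Qed.

Lemma symmetric_eigenvector n (N : 'M[R]_n) a : N^T = N -> eigenvalue N a ->
  exists2 x : 'cV[R]_n, sqnorm x = 1 & N *m x = a *: x.
Proof.
move=> N_sym /eigenvalueP [u uN u_neq0].
have uT_gt0 : 0 < sqnorm u^T by rewrite sqnorm_gt0 trmx_eq0.
exists ((Num.sqrt (sqnorm u^T))^-1 *: u^T).
  by rewrite sqnormZ exprVn sqr_sqrtr ?ltW // mulVf ?gt_eqF.
by rewrite -scalemxAr -{1}N_sym -trmx_mul uN linearZ /= scalerA mulrC -scalerA.
Qed.

Lemma symmetric_eigenvalue n (N : 'M[R]_n) a (x : 'cV[R]_n) :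
  N^T = N -> x != 0 -> N *m x = a *: x -> eigenvalue N a.
Proof.
move=> N_sym x_neq0 Nx; apply/eigenvalueP; exists x^T; last by rewrite trmx_eq0.
by rewrite -{1}N_sym -trmx_mul Nx linearZ.
Qed.

Lemma gram_sym m n (M : 'M[R]_(m, n)) : (M^T *m M)^T = M^T *m M.
Proof. by rewrite trmx_mul trmxK. Qed.

Lemma gram_eq0 m n (M : 'M[R]_(m, n)) : M^T *m M = 0 -> M = 0.
Proof.
move=> MM0; apply/trmx_inj/row_matrixP => j; rewrite trmx0 row0 -tr_col colE.
apply/eqP; rewrite trmx_eq0 -sqnorm_eq0 sqnormE dotc_mulmxr mulmxA MM0 mul0mx.
by rewrite dotc0l.
Qed.

Lemma gram_eigenvalue_ge0 m n (M : 'M[R]_(m, n)) a :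
  eigenvalue (M^T *m M) a -> 0 <= a.
Proof.
move=> /(symmetric_eigenvector (gram_sym M)) [x x1 Mx].
have <- : sqnorm (M *m x) = a.
  by rewrite sqnormE dotc_mulmxr mulmxA Mx dotcC dotcZr -sqnormE x1 mulr1.
exact: sqnorm_ge0.
Qed.

Lemma gram_top_eigenpair m n (M : 'M[R]_(m, n)) : M != 0 ->
  exists lam, exists2 v : 'cV[R]_n,
    [/\ 0 < lam, sqnorm v = 1 & M^T *m M *m v = lam *: v] &
    forall a, eigenvalue (M^T *m M) a -> a <= lam.
Proof.
move=> M_neq0; set N := M^T *m M.
have [a0 a0_neq0 a0_eig] : exists2 a, a != 0 & eigenvalue N a.
  apply: symmetric_nonzero_eigenvalue (gram_sym M) _.
  by apply: contra M_neq0 => /eqP/gram_eq0 ->.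
have charN_neq0 : char_poly N != 0 by rewrite monic_neq0 ?char_poly_monic.
have eigE a : eigenvalue N a = (a \in rootsR (char_poly N)).
  by rewrite eigenvalue_root_char -(roots_on_rootsR charN_neq0).
set lam := \big[Num.max/a0]_(a <- rootsR (char_poly N)) a.
have lam_max a : eigenvalue N a -> a <= lam.
  by rewrite eigE => a_root; apply: le_bigmax_seq.
have lam_eig : eigenvalue N lam.
  rewrite /lam big_seq; apply: (big_ind (fun a => eigenvalue N a)) => //.
    by move=> a b a_eig b_eig; rewrite maxEle; case: ifP.
  by move=> a; rewrite eigE.
have lam_gt0 : 0 < lam.
  apply: lt_le_trans (bigmax_ge_id _ _ _ _).
  by rewrite lt_def a0_neq0 (gram_eigenvalue_ge0 a0_eig).
have [v v1 Nv] := symmetric_eigenvector (gram_sym M) lam_eig.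
by exists lam => //; exists v.
Qed.

Lemma top_singular_pair m n (M : 'M[R]_(m, n)) : M != 0 ->
  exists s (u : 'cV[R]_m) (v : 'cV[R]_n),
    [/\ 0 < s, sqnorm u = 1 /\ sqnorm v = 1, M *m v = s *: u, M^T *m u = s *: v &
        forall a, eigenvalue (M^T *m M) a -> a <= s ^+ 2].
Proof.
move=> /gram_top_eigenpair [lam [v [lam_gt0 v1 MMv] lam_max]].
set s := Num.sqrt lam; have s_gt0 : 0 < s by rewrite sqrtr_gt0.
have s2 : s ^+ 2 = lam by rewrite sqr_sqrtr // ltW.
exists s, (s^-1 *: (M *m v)), v; split; rewrite ?s2 //.
- rewrite sqnormZ sqnormE dotc_mulmxr mulmxA MMv dotcC dotcZr -sqnormE v1 mulr1.
  by rewrite exprVn s2 mulVf ?gt_eqF.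
- by rewrite scalerA mulfV ?gt_eqF // scale1r.
- by rewrite -scalemxAr mulmxA MMv scalerA -s2 expr2 mulKf ?gt_eqF.
Qed.

End SymmetricEigen.

Section SVD.
Variable R : rcfType.

Definition is_svd m n r (M : 'M[R]_(m, n)) (U : 'M[R]_(m, r)) (V : 'M[R]_(n, r))
    (d : nat -> R) : Prop :=
  [/\ orthonormal_cols U, orthonormal_cols V,
      (forall i j, (i <= j < r)%N -> d j <= d i),
      (forall i, (i < r)%N -> 0 <= d i) &
      M = U *m diagr r d *m V^T].
#[global] Arguments is_svd {m n} r M U V d.

Lemma is_svd0 m n r : (r <= m)%N -> (r <= n)%N ->
  is_svd r (0 : 'M[R]_(m, n)) (pid_mx r) (pid_mx r) (fun=> 0).
Proof.
move=> le_rm le_rn; split => //; try exact: orthonormal_cols_pid_mx.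
suff -> : diagr r (fun=> 0 : R) = 0 by rewrite mulmx0 mul0mx.
by apply/matrixP => i j; rewrite !mxE mul0rn.
Qed.

Lemma svd_mul_tr m n r (A : 'M[R]_(m, n)) U V d : is_svd r A U V d ->
  A *m A^T = U *m diagr r (fun k => d k ^+ 2) *m U^T.
Proof.
case=> _ V_o _ _ ->; rewrite !trmx_mul trmxK tr_diagr -!mulmxA (mulmxA V^T) V_o.
rewrite mul1mx !mulmxA -(mulmxA U) mulmx_diag.
by congr (_ *m diag_mx _ *m _); apply/rowP => k; rewrite !mxE expr2.
Qed.

Lemma eigenvalue_gram_diag m n r (M : 'M[R]_(m, n)) U V (d : nat -> R) (i : 'I_r) :
  orthonormal_cols U -> orthonormal_cols V -> M = U *m diagr r d *m V^T ->
  eigenvalue (M^T *m M) (d i ^+ 2).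
Proof.
move=> U_o V_o ->; set x := V *m (delta_mx i 0 : 'cV[R]_r).
apply: (symmetric_eigenvalue (gram_sym _) (x := x)).
  rewrite -sqnorm_eq0 sqnorm_orthonormal // sqnormE /dotc.
  by rewrite trmx_delta mul_delta_mx !mxE !eqxx oner_eq0.
rewrite !trmx_mul trmxK tr_diagr -!mulmxA (mulmxA U^T) U_o mul1mx.
rewrite (mulmxA V^T) V_o mul1mx (diagr_delta d i) -scalemxAr (diagr_delta d i).
by rewrite scalerA -expr2 scalemxAr.
Qed.

Lemma svd_deflation m n (M : 'M[R]_(1 + m, 1 + n)) s u v :
  sqnorm u = 1 -> sqnorm v = 1 -> M *m v = s *: u -> M^T *m u = s *: v ->
  exists Hu Hv (M' : 'M[R]_(m, n)),
    [/\ orthonormal_cols Hu, orthonormal_cols Hv &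
        M = Hu *m block_mx (s%:M : 'M_1) 0 0 M' *m Hv^T].
Proof.
move=> u1 v1 Mv MTu.
have [Hu Hu_o Hu0] := orthonormal_col0_completion u1.
have [Hv Hv_o Hv0] := orthonormal_col0_completion v1.
pose K : 'M[R]_(1 + m, 1 + n) := Hu^T *m M *m Hv.
have Kcol i : K i 0 = s * (i == 0)%:R.
  have /matrixP/(_ i 0) : col 0 K = s *: delta_mx 0 0.
    rewrite colE /K -!mulmxA -colE Hv0 Mv -scalemxAr -Hu0 colE.
    by rewrite mulmxA Hu_o mul1mx.
  by rewrite !mxE andbT.
have Krow j : K 0 j = s * (j == 0)%:R.
  have /matrixP/(_ j 0) : col 0 K^T = s *: delta_mx 0 0.
    rewrite colE /K !trmx_mul trmxK -!mulmxA -colE Hu0 MTu -scalemxAr -Hv0 colE.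
    by rewrite mulmxA Hv_o mul1mx.
  by rewrite !mxE andbT.
have Kblock : block_mx (s%:M : 'M_1) 0 0 (drsubmx K) = K.
  have l0 p : lshift p (0 : 'I_1) = 0 by apply: val_inj.
  have r0 p (k : 'I_p) : (rshift 1 k == 0) = false by [].
  apply/matrixP => i j.
  case: (split_ordP i) => {}i ->; case: (split_ordP j) => {}j ->.
  - by rewrite block_mxEul !ord1 !l0 Kcol mxE !eqxx mulr1.
  - by rewrite block_mxEur ord1 l0 Krow r0 mulr0 mxE.
  - by rewrite block_mxEdl ord1 l0 Kcol r0 mulr0 mxE.
  - by rewrite block_mxEdr !mxE.
exists Hu, Hv, (drsubmx K); split => //.
by rewrite Kblock /K !mulmxA (mulmx1C Hu_o) mul1mx -mulmxA (mulmx1C Hv_o) mulmx1.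
Qed.

Lemma svd_block_factor m n r (Hu : 'M[R]_(1 + m)) (Hv : 'M[R]_(1 + n))
    (U : 'M[R]_(m, r)) (V : 'M[R]_(n, r)) s (d : nat -> R) :
  Hu *m block_mx (s%:M : 'M_1) 0 0 (U *m diagr r d *m V^T) *m Hv^T =
  Hu *m block_mx 1%:M 0 0 U *m diagr (1 + r) (fun i => if i is i'.+1 then d i' else s)
    *m (Hv *m block_mx 1%:M 0 0 V)^T.
Proof.
rewrite diagr_block trmx_mul -!mulmxA; congr (Hu *m _).
rewrite !mulmxA; congr (_ *m Hv^T); rewrite tr_block_mx !trmx0 trmx1 !mulmx_block.
by rewrite !mulmx0 !mul0mx !mulmx1 !mul1mx !addr0 !add0r mul0mx.
Qed.

Theorem svd_exists m n (M : 'M[R]_(m, n)) :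
  exists U V d, is_svd (minn m n) M U V d.
Proof.
have svd0 p q : exists U V d, is_svd (minn p q) (0 : 'M[R]_(p, q)) U V d.
  by do 3 eexists; apply: is_svd0; [apply: geq_minl | apply: geq_minr].
elim: m n M => [|m IHm] n M; first by rewrite (flatmx0 M).
case: n M => [|n] M; first by rewrite (thinmx0 M).
have [->|/top_singular_pair [s [u [v [s_gt0 [u1 v1] Mv MTu top]]]]] := eqVneq M 0.
  exact: svd0.
have [Hu [Hv [M' [Hu_o Hv_o M_eq]]]] := svd_deflation u1 v1 Mv MTu.
have [U' [V' [d' [U'_o V'_o d'_mono d'_ge0 M'_eq]]]] := IHm n M'.
set d := fun i => if i is i'.+1 then d' i' else s.
set U := Hu *m block_mx 1%:M 0 0 U'; set V := Hv *m block_mx 1%:M 0 0 V'.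
have U_o : orthonormal_cols U.
  exact: orthonormal_colsM Hu_o (orthonormal_cols_block U'_o).
have V_o : orthonormal_cols V.
  exact: orthonormal_colsM Hv_o (orthonormal_cols_block V'_o).
have {}M_eq : M = U *m diagr (1 + minn m n) d *m V^T.
  by rewrite M_eq M'_eq svd_block_factor.
(* [d' 0 ^+ 2 = d 1 ^+ 2] is an eigenvalue of [M^T M], hence at most [s ^+ 2] *)
have d'0_le_s : (0 < minn m n)%N -> d' 0%N <= s.
  move=> mn_gt0; rewrite -(ler_sqr (d'_ge0 _ mn_gt0) (ltW s_gt0)).
  exact: top (eigenvalue_gram_diag (Ordinal (mn_gt0 : 1 < 1 + minn m n)%N) U_o V_o M_eq).
rewrite minnSS; exists U, V, d; split => //.
- move=> [|i] [|j] //=; rewrite ?ltnS => ij_lt.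
  + apply: le_trans (d'_mono 0%N j ij_lt) (d'0_le_s _).
    exact: leq_ltn_trans ij_lt.
  + exact: d'_mono.
- by move=> [|i] /= i_lt; [apply: ltW | apply: d'_ge0].
Qed.

End SVD.

Section SingularValues.
Variable R : rcfType.

Lemma sv_singular_values m n (M : 'M[R]_(m, n)) : is_singular_values M (sv M).
Proof.
apply: epsilon_spec; have [U [V [d [U_o V_o d_mono d_ge0 ->]]]] := svd_exists M.
exists (fun i => if (i < minn m n)%N then d i else 0), U, V; split => //.
- move=> i j ij; case: ifPn => j_lt; case: ifPn => i_lt //.
  + by apply: d_mono; rewrite ij.
  + by move: i_lt; rewrite (leq_ltn_trans ij j_lt).
  + exact: d_ge0.
- by move=> i; case: ifP => // /d_ge0.
- by move=> i; rewrite ltnNge => ->.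
- by congr (_ *m _ *m _); apply/matrixP => i j; rewrite !mxE ltn_ord.
Qed.

Lemma sv_svd m n (M : 'M[R]_(m, n)) : exists U V, is_svd (minn m n) M U V (sv M).
Proof.
have [U [V [[U_o V_o] sv_mono sv_ge0 _ M_eq]]] := sv_singular_values M.
by exists U, V; split => // i j /andP[ij _]; apply: sv_mono.
Qed.

Lemma sv_ge0 m n (M : 'M[R]_(m, n)) i : 0 <= sv M i.
Proof. by have [U [V [_ _ ->]]] := sv_singular_values M. Qed.

Lemma sv_nonincreasing m n (M : 'M[R]_(m, n)) i j : (i <= j)%N -> sv M j <= sv M i.
Proof. by have [U [V [_ sv_mono _ _ _]]] := sv_singular_values M; apply: sv_mono. Qed.

End SingularValues.

Section CourantFischer.
Variables (R : rcfType) (m n r : nat) (M : 'M[R]_(m, n)).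
Variables (U : 'M[R]_(m, r)) (V : 'M[R]_(n, r)) (d : nat -> R).
Hypothesis svdM : is_svd r M U V d.

Lemma svd_sqr_le i j : (i <= j < r)%N -> d j ^+ 2 <= d i ^+ 2.
Proof.
case: svdM => _ _ d_mono d_ge0 _ /andP[ij j_lt].
by rewrite ler_sqr ?nnegrE ?d_ge0 ?d_mono ?ij ?(leq_ltn_trans ij).
Qed.

Lemma svd_diagr_pid_sqnorm_ge i (y : 'cV[R]_i.+1) : (i < r)%N ->
  d i ^+ 2 * sqnorm y <= sqnorm (diagr r d *m (pid_mx i.+1 *m y)).
Proof.
move=> lt_ir; rewrite -(sqnorm_orthonormal y (orthonormal_cols_pid_mx _ lt_ir)).
apply: sqnorm_diagr_ge => a Ey_a; apply: svd_sqr_le; rewrite lt_ir andbT leqNgt.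
by apply: contra Ey_a => lt_ia; rewrite pid_mx_mul_coord0.
Qed.

Lemma svd_sqr_le_of_ker_bound i (C : 'M[R]_(i, n)) c : (i < r)%N ->
  (forall x, C *m x = 0 -> sqnorm (M *m x) <= c * sqnorm x) -> d i ^+ 2 <= c.
Proof.
case: svdM => U_o V_o _ _ M_eq lt_ir C_bound.
set E : 'M[R]_(r, i.+1) := pid_mx i.+1.
have E_o : orthonormal_cols E := orthonormal_cols_pid_mx _ lt_ir.
have [y y_neq0 Cy] := kernel_nonzero (C *m (V *m E)).
set x := V *m (E *m y).
have Cx : C *m x = 0 by rewrite /x !mulmxA -(mulmxA C).
have Mx : sqnorm (M *m x) = sqnorm (diagr r d *m (E *m y)).
  by rewrite M_eq /x -!mulmxA (mulmxA V^T) V_o mul1mx sqnorm_orthonormal.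
have := C_bound x Cx; rewrite Mx => /(le_trans (svd_diagr_pid_sqnorm_ge y lt_ir)).
by rewrite /x !sqnorm_orthonormal // ler_pM2r // sqnorm_gt0.
Qed.

Lemma svd_sqr_ge_of_range_bound i (S : 'M[R]_(n, i.+1)) c : (i < r)%N ->
  orthonormal_cols S -> (forall y, c * sqnorm y <= sqnorm (M *m (S *m y))) ->
  c <= d i ^+ 2.
Proof.
case: svdM => U_o V_o _ _ M_eq lt_ir S_o S_bound.
have [y y_neq0 Ey] := kernel_nonzero ((pid_mx i : 'M[R]_(r, i))^T *m V^T *m S).
set w := V^T *m (S *m y).
have upper : sqnorm (M *m (S *m y)) <= d i ^+ 2 * sqnorm y.
  rewrite M_eq -!mulmxA sqnorm_orthonormal // -/w.
  apply: (@le_trans _ _ (d i ^+ 2 * sqnorm w)).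
    apply: sqnorm_diagr_le => a w_a; apply: svd_sqr_le.
    rewrite ltn_ord andbT leqNgt; apply: contra w_a => lt_ai.
    by rewrite (tr_pid_mx_mul_coord0 _ lt_ai) // /w !mulmxA.
  rewrite ler_wpM2l ?sqr_ge0 // -(sqnorm_orthonormal y S_o).
  exact: sqnorm_tr_orthonormal_le.
have := le_trans (S_bound y) upper.
by rewrite ler_pM2r // sqnorm_gt0.
Qed.

End CourantFischer.

Section ShiftedPowerStep.
Variables (R : rcfType) (m n l : nat) (A : 'M[R]_(m, n)) (Q : 'M[R]_(m, l)) (a : R).
Hypothesis Q_o : orthonormal_cols Q.
Local Notation B := (A *m A^T *m Q - a *: Q).

Lemma shifted_sqnorm_le r U V d i (x : 'cV[R]_l) :
  is_svd r A U V d -> (i < r)%N -> 0 <= a -> 2 * a <= d i ^+ 2 ->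
  (pid_mx i : 'M[R]_(r, i))^T *m U^T *m Q *m x = 0 ->
  sqnorm (B *m x) <= (d i ^+ 2 - a) ^+ 2 * sqnorm x.
Proof.
move=> svdA lt_ir a_ge0 a_le x_ker.
have U_o : orthonormal_cols U by case: svdA.
set y := Q *m x; set w := U^T *m y; set z := y - U *m w.
have Uz0 : U^T *m z = 0 by rewrite mulmxBr (mulmxA U^T U) U_o mul1mx subrr.
set v := diagr r (fun k => d k ^+ 2 - a) *m w.
have Bx : B *m x = U *m v - a *: z.
  rewrite /v /z diagrB (_ : diagr r (fun=> a) = a%:M); last first.
    by apply/matrixP => j k; rewrite !mxE.
  rewrite mulmxBl -scalemxAl (svd_mul_tr svdA) -!mulmxA -/y -/w mulmxBl.
  by rewrite mul_scalar_mx mulmxBr scalerBr scalemxAr opprB addrA -!scalemxAr subrK.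
have v_le : sqnorm v <= (d i ^+ 2 - a) ^+ 2 * sqnorm w.
  apply: sqnorm_diagr_le => k w_k.
  have le_ik : (i <= k)%N.
    rewrite leqNgt; apply: contra w_k => lt_ki.
    by rewrite (tr_pid_mx_mul_coord0 _ lt_ki) // /w /y !mulmxA.
  have := svd_sqr_le svdA (_ : (i <= k < r)%N).
  rewrite le_ik ltn_ord => /(_ isT) dk_le; rewrite -subr_ge0.
  have -> : (d i ^+ 2 - a) ^+ 2 - (d k ^+ 2 - a) ^+ 2 =
            (d i ^+ 2 - d k ^+ 2) * (d i ^+ 2 + d k ^+ 2 - 2 * a) by ring.
  by apply: mulr_ge0; have := sqr_ge0 (d k); lra.
have a_le' : a ^+ 2 <= (d i ^+ 2 - a) ^+ 2 by rewrite ler_sqr ?nnegrE; lra.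
rewrite Bx sqnormB dotcZr dotcC dotc_mulmxr Uz0 dotc0l sqnormZ sqnorm_orthonormal //.
rewrite -(sqnorm_orthonormal x Q_o) -/y (sqnorm_orthonormal_proj y U_o) -/w -/z.
by rewrite !mulr0 subr0 mulrDr lerD // ler_wpM2r ?sqnorm_ge0.
Qed.

Lemma shifted_sv_le rA UA VA dA rB UB VB dB i :
  is_svd rA A UA VA dA -> is_svd rB B UB VB dB -> (i < rA)%N -> (i < rB)%N ->
  0 <= a -> 2 * a <= dA i ^+ 2 -> dB i <= dA i ^+ 2 - a.
Proof.
move=> svdA svdB lt_irA lt_irB a_ge0 a_le.
have dB_ge0 : 0 <= dB i by case: svdB => _ _ _ /(_ i lt_irB).
rewrite -(ler_sqr dB_ge0) ?nnegrE; last by lra.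
apply: (svd_sqr_le_of_ker_bound svdB (C := (pid_mx i)^T *m UA^T *m Q)) => // x x_ker.
exact: shifted_sqnorm_le svdA lt_irA a_ge0 a_le x_ker.
Qed.

Lemma shifted_sv_ge rB UB VB dB rP UP VP dP i :
  is_svd rB B UB VB dB -> is_svd rP (Q^T *m A) UP VP dP ->
  (i < rB)%N -> (i < rP)%N -> dP i ^+ 2 - a <= dB i.
Proof.
move=> svdB svdP lt_irB lt_irP; have [UP_o VP_o _ _ P_eq] := svdP.
have dB_ge0 : 0 <= dB i by case: svdB => _ _ _ /(_ i lt_irB).
set c := dP i ^+ 2 - a; have [c_le0|c_gt0] := lerP c 0; first exact: le_trans dB_ge0.
rewrite -(ler_sqr (ltW c_gt0) dB_ge0).
set S := UP *m (pid_mx i.+1 : 'M[R]_(rP, i.+1)).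
have S_o : orthonormal_cols S.
  exact: orthonormal_colsM UP_o (orthonormal_cols_pid_mx _ lt_irP).
apply: (svd_sqr_ge_of_range_bound svdB lt_irB S_o) => y; set x := S *m y.
have Qx_sqnorm : sqnorm (Q *m x) = sqnorm y by rewrite !sqnorm_orthonormal.
rewrite -Qx_sqnorm; apply: sqr_le_of_dotc_ge; first exact: ltW.
have PTx : dP i ^+ 2 * sqnorm y <= sqnorm ((Q^T *m A)^T *m x).
  rewrite P_eq !trmx_mul trmxK tr_diagr /x /S -!mulmxA (mulmxA UP^T) UP_o mul1mx.
  by rewrite sqnorm_orthonormal //; apply: (svd_diagr_pid_sqnorm_ge svdP y lt_irP).
have QxBx : dotc (Q *m x) (B *m x) =
            sqnorm ((Q^T *m A)^T *m x) - a * sqnorm (Q *m x).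
  rewrite mulmxBl -scalemxAl dotcDr dotcNr dotcZr -!mulmxA dotc_mulmxr -!sqnormE.
  by rewrite trmx_mul trmxK mulmxA.
by rewrite QxBx Qx_sqnorm /c mulrBl lerB.
Qed.

Lemma sv_shifted_bounds i : (l <= minn m n)%N -> (i < l)%N ->
  0 <= a -> 2 * a <= sv A i ^+ 2 ->
  sv (Q^T *m A) i ^+ 2 - a <= sv B i /\ sv B i <= sv A i ^+ 2 - a.
Proof.
move=> l_le lt_il a_ge0 a_le.
have [UA [VA svdA]] := sv_svd A; have [UB [VB svdB]] := sv_svd B.
have [UP [VP svdP]] := sv_svd (Q^T *m A).
have lt_iA : (i < minn m n)%N := leq_trans lt_il l_le.
have lt_iB : (i < minn m l)%N.
  by rewrite leq_min lt_il (leq_trans lt_iA (geq_minl _ _)).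
have lt_iP : (i < minn l n)%N.
  by rewrite leq_min lt_il (leq_trans lt_iA (geq_minr _ _)).
split; first exact: shifted_sv_ge svdB svdP lt_iB lt_iP.
exact: shifted_sv_le svdA svdB lt_iA lt_iB a_ge0 a_le.
Qed.

End ShiftedPowerStep.

Section Algorithm2.
Variables (R : rcfType) (m n k s p : nat) (A : 'M[R]_(m, n)) (Om : 'M[R]_(n, k + s)).
Variables (Q : nat -> 'M[R]_(m, k + s)) (alpha : nat -> R).
Hypothesis run : alg2_run A Om p Q alpha.

Lemma alg2_run_rank : (k + s <= \rank A)%N.
Proof.
case: run => Q0_o Q0_span _ _.
rewrite -{1}(orthonormal_cols_rank Q0_o) -mxrank_tr (eqmx_rank Q0_span) mxrank_tr.
exact: mxrankM_maxl.
Qed.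

Lemma alg2_run_le_minn : (k + s <= minn m n)%N.
Proof.
rewrite leq_min (leq_trans alg2_run_rank (rank_leq_row A)).
exact: leq_trans alg2_run_rank (rank_leq_col A).
Qed.

Lemma alg2_run_invariant j : (0 < k + s)%N -> (j <= p)%N ->
  [/\ orthonormal_cols (Q j), 0 <= alpha j & 2 * alpha j <= sv A (k + s).-1 ^+ 2].
Proof.
case: run => Q0_o _ alpha0 step l_gt0.
have [UA [VA svdA]] := sv_svd A.
have lt_l1 : ((k + s).-1 < minn m n)%N by rewrite prednK // alg2_run_le_minn.
have lt_ll : ((k + s).-1 < k + s)%N by rewrite prednK.
elim: j => [|j IHj] lt_jp; first by rewrite alpha0 mulr0 lexx sqr_ge0.
have [Qj_o alpha_ge0 alpha_le] := IHj (ltnW lt_jp).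
have [d [[W svdB] alpha_next]] := step j lt_jp.
have := shifted_sv_le Qj_o svdA svdB lt_l1 lt_ll alpha_ge0 alpha_le.
rewrite alpha_next => d_le; split; first by case: svdB.
  by case: ifP => // lt_alpha_d; apply: divr_ge0 => //; lra.
by case: ifP => // _; lra.
Qed.

End Algorithm2.

Theorem proposition3 (R : rcfType) (m n k s p : nat) (A : 'M[R]_(m, n))
  (Om : 'M[R]_(n, k + s)) (Q : nat -> 'M[R]_(m, k + s)) (alpha : nat -> R) :
  alg2_run A Om p Q alpha ->
  forall j, (j < p)%N -> 0 < alpha j ->
  forall i, (i < k + s)%N ->
    sv ((Q j)^T *m A) i
      <= Num.sqrt (sv (A *m A^T *m Q j - alpha j *: Q j) i + alpha j)
    /\ Num.sqrt (sv (A *m A^T *m Q j - alpha j *: Q j) i + alpha j) <= sv A i.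
Proof.
move=> run j lt_jp _ i lt_il.
have l_gt0 : (0 < k + s)%N := leq_ltn_trans (leq0n i) lt_il.
have [Qj_o alpha_ge0 alpha_le] := alg2_run_invariant run l_gt0 (ltnW lt_jp).
have alpha_le_i : 2 * alpha j <= sv A i ^+ 2.
  apply: le_trans alpha_le _; rewrite ler_sqr ?nnegrE ?sv_ge0 // sv_nonincreasing //.
  by rewrite -ltnS prednK.
have [lower upper] :=
  sv_shifted_bounds Qj_o (alg2_run_le_minn run) lt_il alpha_ge0 alpha_le_i.
split.
  rewrite -[leLHS]ger0_norm ?sv_ge0 // -sqrtr_sqr ler_sqrt ?addr_ge0 ?sv_ge0 //.
  by rewrite -lerBlDr.
rewrite -[leRHS]ger0_norm ?sv_ge0 // -sqrtr_sqr ler_sqrt ?sqr_ge0 //.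
by rewrite -lerBrDr.
Qed.
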